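(* For all $(t,\theta,a,\ell)$ with $t>0$, $a,\ell>0$ and $|\theta|\le at/2$ we have $$at\lesssim\tilde R\lesssim p+at,$$ $$|\partial_\theta\tilde R-1|\lesssim\frac p{at},\qquad|\partial_a\tilde R-t|\lesssim\Big\langle\frac pa\Big\rangle\ln\langle t\rangle,$$ $$|\partial_\theta^2\tilde R|\lesssim\frac p{a^2t^2},\qquad|\partial^2_{a\theta}\tilde R|\lesssim\frac p{a^2t},\qquad|\partial_a^2\tilde R|\lesssim\frac1a\Big\langle\frac pa\Big\rangle\ln\langle t\rangle,$$ where $p=p(a,\ell)$ and all derivatives are taken with respect to the variables $(\theta,a)$ of $\tilde R(t,\theta,a,\ell)=R(\theta+at,a,\ell)$.
   Context: Fix $m>0$. For $a,\ell>0$: $\kappa(a,\ell)=(1+4a^2\ell/m^2)^{-1/2}$, $p(a,\ell)=\frac{m}{2a^2\kappa(a,\ell)}$. For $\kappa\in(0,1)$, $G_\kappa(x)=\sqrt{x^2-1}-\kappa\ln(x+\sqrt{x^2-1})$ on $[1,\infty)$, $H_\kappa=G_\kappa^{-1}:[0,\infty)\to[1,\infty)$. $R(\theta,a,\ell)=pH_\kappa(|\theta|/p)-p\kappa$ (smooth on $\mathbb R\times(0,\infty)^2$) and $\tilde R(t,\theta,a,\ell)=R(\theta+at,a,\ell)$. $\langle x\rangle=(2+|x|^2)^{1/2}$. $A\lesssim B$ means $A\le CB$ with $C$ independent of $t,\theta,a,\ell$. *)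

From Stdlib Require Import Reals Lra ClassicalEpsilon.
From Coquelicot Require Import Coquelicot.
Open Scope R_scope.

Definition kappa (m a l : R) : R := / sqrt (1 + 4 * a ^ 2 * l / m ^ 2).

Definition pp (m a l : R) : R := m / (2 * a ^ 2 * kappa m a l).

Definition G (k x : R) : R := sqrt (x ^ 2 - 1) - k * ln (x + sqrt (x ^ 2 - 1)).

(* H_kappa = G_kappa^{-1} : [0,oo) -> [1,oo), chosen as the (unique, for
   kappa in (0,1) and y >= 0) x >= 1 with G_kappa x = y. *)
Definition H (k y : R) : R :=
  epsilon (inhabits 1) (fun x => 1 <= x /\ G k x = y).

Definition RR (m th a l : R) : R :=
  pp m a l * H (kappa m a l) (Rabs th / pp m a l) - pp m a l * kappa m a l.

Definition Rt (m t th a l : R) : R := RR m (th + a * t) a l.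

Definition jb (x : R) : R := sqrt (2 + x ^ 2).

From Stdlib Require Import Reals Lra Psatz ClassicalEpsilon.
From Coquelicot Require Import Coquelicot.
Open Scope R_scope.

(* Substituting [x = cosh u] turns [G_kappa] into [sinh u - kappa u], so that
   [Rt = p (cosh u - kappa)] where [u > 0] solves [sinh u - kappa u = y := (th + a t) / p], and
   [|th| <= a t / 2] makes [p y] comparable to [a t]. Implicit differentiation of this equation
   gives the derivatives of [u], hence those of [Rt], as rational expressions in [cosh u],
   [sinh u], [u], [kappa], [p], [a], [t] whose denominators are powers of [D = cosh u - kappa].
   The estimates then reduce to elementary inequalities between [cosh u] and [sinh u], chiefly
   [y <= D], which gives [1 / D <= 2 p / (a t)], and [exp u <= 10 (1 + y)], which bounds [u]
   logarithmically and produces the factor [<p / a> ln <t>]. *)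

Lemma cosh_add_sinh x : cosh x + sinh x = exp x.
Proof. unfold cosh, sinh; field. Qed.

Lemma cosh_sub_sinh x : cosh x - sinh x = exp (- x).
Proof. unfold cosh, sinh; field. Qed.

Lemma cosh_sq_sub_sinh_sq x : cosh x * cosh x - sinh x * sinh x = 1.
Proof.
  replace (cosh x * cosh x - sinh x * sinh x) with ((cosh x + sinh x) * (cosh x - sinh x))
    by ring.
  rewrite cosh_add_sinh, cosh_sub_sinh, <- exp_plus, Rplus_opp_r; apply exp_0.
Qed.

Lemma cosh_ge_1 x : 1 <= cosh x.
Proof.
  pose proof (cosh_sq_sub_sinh_sq x); pose proof (cosh_add_sinh x); pose proof (exp_pos x).
  pose proof (cosh_sub_sinh x); pose proof (exp_pos (- x)); nra.
Qed.

Lemma cosh_sub_pos k x : k < 1 -> 0 < cosh x - k.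
Proof. intros Hk; pose proof (cosh_ge_1 x); lra. Qed.

Lemma sinh_sub_ge a b : a <= b -> b - a <= sinh b - sinh a.
Proof.
  intros [Hab | <-]; [|lra].
  destruct (MVT_cor2 sinh cosh a b Hab (fun c _ => derivable_pt_lim_sinh c)) as [c [-> _]].
  pose proof (cosh_ge_1 c); nra.
Qed.

Lemma sinh_ge_id x : 0 <= x -> x <= sinh x.
Proof. intros Hx; pose proof (sinh_sub_ge 0 x Hx); rewrite sinh_0 in *; lra. Qed.

Lemma cosh_sub_sinh_pos x : 0 < cosh x - sinh x.
Proof. rewrite cosh_sub_sinh; apply exp_pos. Qed.

Lemma cosh_sub_sinh_le_1 x : 0 <= x -> cosh x - sinh x <= 1.
Proof.
  intros Hx; rewrite cosh_sub_sinh, <- exp_0.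
  destruct (Req_dec x 0) as [-> | Hx0]; [rewrite Ropp_0; lra|].
  left; apply exp_increasing; lra.
Qed.

Lemma sinh_le_mul_cosh x : 0 <= x -> sinh x <= x * cosh x.
Proof.
  intros [Hx | <-]; [|rewrite sinh_0; lra].
  destruct (MVT_cor2 (fun v => v * cosh v - sinh v) (fun v => v * sinh v) 0 x Hx) as [c [E Hc]].
  - intros c _; apply is_derive_Reals; unfold cosh, sinh; auto_derive; [exact I | field].
  - rewrite sinh_0, Rmult_0_l in E; pose proof (sinh_ge_id c ltac:(lra)).
    assert (0 <= c * sinh c * (x - 0)) by (apply Rmult_le_pos; [apply Rmult_le_pos|]; lra).
    lra.
Qed.

Lemma exp_le_sinh_sub x : 0 <= x -> exp x <= 10 * (1 + (sinh x - x)).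
Proof.
  intros Hx.
  assert (HF : exp x = exp (x / 2) * exp (x / 2)) by (rewrite <- exp_plus; f_equal; field).
  pose proof (exp_ineq1_le (x / 2)); pose proof (exp_pos (x / 2)); set (F := exp (x / 2)) in *.
  assert (Hs : sinh x = (F * F - / (F * F)) / 2)
    by (unfold sinh; rewrite exp_Ropp, HF; reflexivity).
  rewrite HF, Hs.
  assert (F * F <= 10 * (1 + ((F * F - / (F * F)) / 2 - (2 * F - 2)))); [|lra].
  apply (Rmult_le_reg_r (F * F)); [nra|].
  replace (10 * (1 + ((F * F - / (F * F)) / 2 - (2 * F - 2))) * (F * F)) with
    (10 * F * F + 5 * F ^ 4 - 5 - 20 * F ^ 3 + 20 * F * F) by (field; lra).
  assert (0 <= F * F * ((F - 5/2) ^ 2)) by (apply Rmult_le_pos; [nra|apply pow2_ge_0]).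
  nra.
Qed.

Lemma sqrt_cosh_sq_sub_1 x : 0 <= x -> sqrt (cosh x ^ 2 - 1) = sinh x.
Proof.
  intros Hx; pose proof (cosh_sq_sub_sinh_sq x); pose proof (sinh_ge_id x Hx).
  replace (cosh x ^ 2 - 1) with (sinh x ^ 2) by lra; apply sqrt_pow2; lra.
Qed.

Lemma G_cosh k x : 0 <= x -> G k (cosh x) = sinh x - k * x.
Proof.
  intros Hx; unfold G; rewrite sqrt_cosh_sq_sub_1, cosh_add_sinh, ln_exp by exact Hx.
  reflexivity.
Qed.

Definition arcosh (x : R) : R := ln (x + sqrt (x ^ 2 - 1)).

Lemma cosh_sinh_arcosh x : 1 <= x ->
  cosh (arcosh x) = x /\ sinh (arcosh x) = sqrt (x ^ 2 - 1).
Proof.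
  intros Hx; set (r := sqrt (x ^ 2 - 1)).
  assert (Hr : 0 <= r) by apply sqrt_pos.
  assert (Hrr : r * r = x ^ 2 - 1) by (apply sqrt_sqrt; nra).
  assert (Ep : exp (arcosh x) = x + r) by (apply exp_ln; lra).
  assert (Em : exp (- arcosh x) = x - r).
  { rewrite exp_Ropp, Ep; field_simplify_eq; nra. }
  unfold cosh, sinh; rewrite Ep, Em; split; field.
Qed.

Lemma G_arcosh k x : 1 <= x -> G k x = sinh (arcosh x) - k * arcosh x.
Proof. intros Hx; rewrite (proj2 (cosh_sinh_arcosh x Hx)); reflexivity. Qed.

Definition U (k y : R) : R :=
  epsilon (inhabits 0) (fun u => 0 <= u /\ sinh u - k * u = y).

Lemma sinh_sub_mul_inj k u v : k < 1 -> sinh u - k * u = sinh v - k * v -> u = v.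
Proof.
  intros Hk E; destruct (Rtotal_order u v) as [Huv | [Huv | Huv]]; [| exact Huv |].
  - pose proof (sinh_sub_ge u v (Rlt_le _ _ Huv)); nra.
  - pose proof (sinh_sub_ge v u (Rlt_le _ _ Huv)); nra.
Qed.

Lemma U_exists k y : k < 1 -> 0 < y -> exists u, 0 <= u /\ sinh u - k * u = y.
Proof.
  intros Hk Hy; set (M := y / (1 - k) + 1).
  assert (HM : 0 < M) by (unfold M; pose proof (Rdiv_lt_0_compat y (1 - k) Hy ltac:(lra)); lra).
  assert (HMk : (1 - k) * M - y = 1 - k) by (unfold M; field; lra).
  destruct (IVT (fun u => sinh u - k * u - y) 0 M) as [u [Hu E]].
  - intros z; apply continuity_pt_minus; [apply continuity_pt_minus|apply continuity_pt_const].
    + apply derivable_continuous_pt, derivable_pt_sinh.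
    + apply continuity_pt_scal, derivable_continuous_pt, derivable_pt_id.
    + intros ? ?; reflexivity.
  - exact HM.
  - rewrite sinh_0; lra.
  - pose proof (sinh_ge_id M (Rlt_le _ _ HM)); nra.
  - exists u; split; lra.
Qed.

Lemma U_spec k y : k < 1 -> 0 < y -> 0 < U k y /\ sinh (U k y) - k * U k y = y.
Proof.
  intros Hk Hy; destruct (epsilon_spec (inhabits 0) _ (U_exists k y Hk Hy)) as [[Hu|Hu] E];
    fold (U k y) in Hu, E; split; try assumption.
  rewrite <- Hu, sinh_0 in E; lra.
Qed.

Lemma H_cosh_U k y : k < 1 -> 0 < y -> H k y = cosh (U k y).
Proof.
  intros Hk Hy; destruct (U_spec k y Hk Hy) as [Hu EU].
  assert (HH : exists x, 1 <= x /\ G k x = y).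
  { exists (cosh (U k y)); split; [apply cosh_ge_1 | rewrite G_cosh; lra]. }
  destruct (epsilon_spec (inhabits 1) _ HH) as [Hx EG]; fold (H k y) in Hx, EG.
  rewrite G_arcosh in EG by exact Hx.
  rewrite <- (proj1 (cosh_sinh_arcosh _ Hx)); f_equal.
  apply (sinh_sub_mul_inj k); lra.
Qed.

Lemma is_derive_difference_quotient (f : R -> R) (x l : R) :
  is_derive f x l <-> is_lim (fun h => (f (x + h) - f x) / h) 0 l.
Proof.
  rewrite is_derive_Reals; split; intros Hf.
  - apply is_lim_spec; intros eps; destruct (Hf eps (cond_pos eps)) as [d Hd].
    exists d; intros h Hh Hh0; apply Hd; [exact Hh0|].
    change (Rabs (h - 0) < d) in Hh; rewrite Rminus_0_r in Hh; exact Hh.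
  - apply is_lim_spec in Hf; intros eps Heps; destruct (Hf (mkposreal eps Heps)) as [d Hd].
    exists d; intros h Hh0 Hh; apply Hd; [|exact Hh0].
    change (Rabs (h - 0) < d); rewrite Rminus_0_r; exact Hh.
Qed.

Lemma is_lim_shift_of_derive (f : R -> R) (x l : R) :
  is_derive f x l -> is_lim (fun h => f (x + h)) 0 (f x).
Proof.
  intros Hf; assert (Hc : continuous f x) by (apply (ex_derive_continuous f x); exists l; exact Hf).
  assert (Hlim : is_lim f x (f x)) by (apply is_lim_continuity, continuity_pt_filterlim, Hc).
  assert (Hlin : is_lim (fun h => f (1 * h + x)) 0 (f x)).
  { apply is_lim_comp_lin; [|lra]; simpl; rewrite Rmult_0_r, Rplus_0_l; exact Hlim. }
  eapply is_lim_ext; [|exact Hlin]; intros h; simpl; f_equal; ring.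
Qed.

Lemma locally'_0_neq : Rbar_locally' 0 (fun h => h <> 0).
Proof. exists (mkposreal 1 Rlt_0_1); intros h _ Hh; exact Hh. Qed.

Definition expanding (f : R -> R) : Prop := forall a b, a <= b -> b - a <= f b - f a.

Lemma expanding_sinh : expanding sinh.
Proof. exact sinh_sub_ge. Qed.

Lemma expanding_slope_ge_1 (f : R -> R) (a b : R) :
  expanding f -> a <> b -> 1 <= (f b - f a) / (b - a).
Proof.
  intros Hf Hab; destruct (Rlt_or_le a b) as [Hlt | Hle].
  - apply Rle_div_r; [lra|]; specialize (Hf a b); lra.
  - replace ((f b - f a) / (b - a)) with ((f a - f b) / (a - b)) by (field; lra).
    apply Rle_div_r; [lra|]; specialize (Hf b a); lra.
Qed.

Lemma expanding_derive_ge_1 (f : R -> R) (x d : R) : expanding f -> is_derive f x d -> 1 <= d.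
Proof.
  intros Hf Hd; apply is_derive_difference_quotient in Hd.
  apply (is_lim_le_loc (fun _ => 1) (fun h => (f (x + h) - f x) / h) 0 1 d);
    [| apply is_lim_const | exact Hd].
  eapply filter_imp; [|exact locally'_0_neq]; intros h Hh; simpl.
  replace h with (x + h - x) at 2 by ring.
  apply expanding_slope_ge_1; [exact Hf | lra].
Qed.

Lemma locally_shift (P : R -> Prop) (x : R) : locally x P -> Rbar_locally' 0 (fun h => P (x + h)).
Proof.
  intros [e He]; exists e; intros h Hh _; apply He.
  change (Rabs (h - 0) < e) in Hh; change (Rabs (x + h - x) < e).
  replace (x + h - x) with (h - 0) by ring; exact Hh.
Qed.

(* Implicit differentiation of [phi (g z) - k z * g z = y z] at [x]; no regularity of [g] is
   assumed, its continuity comes from [phi] being expanding and [k x < 1]. *)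
Section ImplicitDerivative.

Variables (phi k y g : R -> R) (x dphi dk dy : R).
Hypotheses (phi_expanding : expanding phi) (phi_derive : is_derive phi (g x) dphi)
  (k_derive : is_derive k x dk) (y_derive : is_derive y x dy) (k_lt_1 : k x < 1)
  (g_implicit : locally x (fun z => phi (g z) - k z * g z = y z)).

Let slope (v : R) : R :=
  match Req_EM_T v (g x) with
  | left _ => dphi
  | right _ => (phi v - phi (g x)) / (v - g x)
  end.

Lemma slope_ge_1 v : 1 <= slope v.
Proof.
  unfold slope; destruct (Req_EM_T v (g x)) as [_ | Hv].
  - exact (expanding_derive_ge_1 phi _ _ phi_expanding phi_derive).
  - apply expanding_slope_ge_1; auto.
Qed.

Lemma slope_spec v : phi v - phi (g x) = (v - g x) * slope v.
Proof. unfold slope; destruct (Req_EM_T v (g x)) as [-> | Hv]; [ring | field; lra]. Qed.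

Lemma slope_at : slope (g x) = dphi.
Proof. unfold slope; destruct (Req_EM_T (g x) (g x)) as [_ | []]; reflexivity. Qed.

Lemma slope_continuous : continuous slope (g x).
Proof.
  apply filterlim_locally; intros eps; rewrite slope_at.
  destruct (proj1 (is_derive_Reals _ _ _) phi_derive eps (cond_pos eps)) as [d Hd].
  exists d; intros v Hv; change (Rabs (v - g x) < d) in Hv; change (Rabs (slope v - dphi) < eps).
  unfold slope; destruct (Req_EM_T v (g x)) as [_ | Hne].
  - rewrite Rminus_eq_0, Rabs_R0; apply cond_pos.
  - specialize (Hd (v - g x)); rewrite Rplus_minus in Hd.
    apply Hd; [lra | exact Hv].
Qed.

Lemma implicit_increment : Rbar_locally' 0 (fun h =>
  k (x + h) < (1 + k x) / 2 /\
  (g (x + h) - g x) * (slope (g (x + h)) - k (x + h))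
    = (y (x + h) - y x) + g x * (k (x + h) - k x)).
Proof.
  assert (Hk : Rbar_locally' 0 (fun h => Rabs (k (x + h) - k x) < (1 - k x) / 2)).
  { pose proof (is_lim_shift_of_derive _ _ _ k_derive) as Hlim; apply is_lim_spec in Hlim.
    exact (Hlim (mkposreal ((1 - k x) / 2) ltac:(lra))). }
  eapply filter_imp; [|exact (filter_and _ _ Hk (locally_shift _ _ g_implicit))].
  intros h [Hkh Eh]; apply Rabs_def2 in Hkh; split; [lra|].
  pose proof (locally_singleton _ _ g_implicit) as E0; simpl in E0.
  rewrite Rmult_minus_distr_l, <- slope_spec; lra.
Qed.

Lemma implicit_increment_bound : Rbar_locally' 0 (fun h =>
  Rabs (g (x + h) - g x) <= Rabs ((y (x + h) - y x) + g x * (k (x + h) - k x)) * (2 / (1 - k x))).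
Proof.
  eapply filter_imp; [|exact implicit_increment]; intros h [Hkh E].
  pose proof (slope_ge_1 (g (x + h))).
  rewrite <- E, Rabs_mult, (Rabs_right (_ - k (x + h))) by lra.
  apply (Rmult_le_reg_r ((1 - k x) / 2)); [lra|].
  replace (Rabs (g (x + h) - g x) * (slope (g (x + h)) - k (x + h)) * (2 / (1 - k x))
    * ((1 - k x) / 2)) with (Rabs (g (x + h) - g x) * (slope (g (x + h)) - k (x + h)))
    by (field; lra).
  apply Rmult_le_compat_l; [apply Rabs_pos | lra].
Qed.

Lemma implicit_continuous : is_lim (fun h => g (x + h)) 0 (g x).
Proof.
  set (B h := Rabs ((y (x + h) - y x) + g x * (k (x + h) - k x)) * (2 / (1 - k x))).
  assert (HN : is_lim (fun h => (y (x + h) - y x) + g x * (k (x + h) - k x)) 0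
                     ((y x - y x) + g x * (k x - k x))).
  { apply is_lim_plus'; [|apply (is_lim_scal_l _ (g x) 0 (k x - k x))];
      apply is_lim_minus'; try apply is_lim_const.
    - exact (is_lim_shift_of_derive _ _ _ y_derive).
    - exact (is_lim_shift_of_derive _ _ _ k_derive). }
  assert (HB : is_lim B 0 0).
  { apply (is_lim_Rabs _ _ _), (is_lim_scal_r _ (2 / (1 - k x)) 0 (Rabs _)) in HN.
    rewrite !Rminus_eq_0, Rmult_0_r, Rplus_0_r, Rabs_R0 in HN; simpl in HN.
    rewrite Rmult_0_l in HN; exact HN. }
  apply (is_lim_le_le_loc (fun h => g x - B h) (fun h => g x + B h)).
  - eapply filter_imp; [|exact implicit_increment_bound]; intros h Hh.
    apply Rabs_le_between in Hh; unfold B; lra.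
  - replace (Finite (g x)) with (Finite (g x - 0)) by (f_equal; ring).
    apply is_lim_minus'; [apply is_lim_const | exact HB].
  - replace (Finite (g x)) with (Finite (g x + 0)) by (f_equal; ring).
    apply is_lim_plus'; [apply is_lim_const | exact HB].
Qed.

Lemma is_derive_implicit : is_derive g x ((dk * g x + dy) / (dphi - k x)).
Proof.
  pose proof (expanding_derive_ge_1 phi _ _ phi_expanding phi_derive).
  apply is_derive_difference_quotient.
  assert (Hslope : is_lim (fun h => slope (g (x + h))) 0 dphi).
  { rewrite <- slope_at.
    apply is_lim_comp_continuous; [exact implicit_continuous | exact slope_continuous]. }
  assert (Hlim : is_lim (fun h => ((y (x + h) - y x) / h + g x * ((k (x + h) - k x) / h))
                                   / (slope (g (x + h)) - k (x + h))) 0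
                   ((dy + g x * dk) / (dphi - k x))).
  { apply (is_lim_div _ _ _ (dy + g x * dk) (dphi - k x));
      [| | intros E; injection E; lra | exact I].
    - apply is_lim_plus'; [apply is_derive_difference_quotient, y_derive|].
      apply (is_lim_mult _ _ _ (g x) dk); [apply is_lim_const | | exact I].
      apply is_derive_difference_quotient, k_derive.
    - apply is_lim_minus'; [exact Hslope | exact (is_lim_shift_of_derive _ _ _ k_derive)]. }
  replace (dk * g x + dy) with (dy + g x * dk) by ring.
  eapply is_lim_ext_loc; [|exact Hlim].
  eapply filter_imp; [|exact (filter_and _ _ implicit_increment locally'_0_neq)].
  intros h [[Hkh E] Hh]; pose proof (slope_ge_1 (g (x + h))).
  apply (Rmult_eq_reg_r ((slope (g (x + h)) - k (x + h)) * h));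
    [| apply Rmult_integral_contrapositive; split; lra].
  field_simplify; [| lra | split; lra].
  replace (y (x + h) - y x + g x * k (x + h) - g x * k x)
    with ((y (x + h) - y x) + g x * (k (x + h) - k x)) by ring.
  rewrite <- E; ring.
Qed.

End ImplicitDerivative.

Definition dkappa (k a : R) : R := - k * (1 - k ^ 2) / a.

Section KappaPDerivatives.

Variables (m l : R).
Hypotheses (hm : 0 < m) (hl : 0 < l).

Lemma kappa_bounds a : 0 < a -> 0 < kappa m a l < 1.
Proof.
  intros ha; unfold kappa.
  assert (H1 : 0 < 4 * a ^ 2 * l / m ^ 2)
    by (apply Rdiv_lt_0_compat; [|apply pow_lt; lra]; pose proof (pow_lt a 2 ha); nra).
  pose proof (sqrt_lt_1 1 (1 + 4 * a ^ 2 * l / m ^ 2) ltac:(lra) ltac:(lra) ltac:(lra)) as Hs.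
  rewrite sqrt_1 in Hs; split; [apply Rinv_0_lt_compat; lra|].
  rewrite <- Rinv_1 at 2; apply Rinv_lt_contravar; lra.
Qed.

Lemma is_derive_kappa a : 0 < a ->
  is_derive (fun b => kappa m b l) a (dkappa (kappa m a l) a).
Proof.
  intros ha; unfold kappa; set (X := 1 + 4 * a ^ 2 * l / m ^ 2).
  assert (HX : 1 < X)
    by (unfold X; pose proof (pow_lt a 2 ha); pose proof (pow_lt m 2 hm);
        assert (0 < 4 * a ^ 2 * l / m ^ 2) by (apply Rdiv_lt_0_compat; nra); lra).
  assert (HS : 0 < sqrt X) by (apply sqrt_lt_R0; lra).
  assert (HSS : sqrt X * sqrt X = X) by (apply sqrt_sqrt; lra).
  assert (EX : 1 + 4 * (a * (a * 1)) * l * / (m * (m * 1)) = X) by (unfold X; field; lra).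
  assert (EL : 4 * (1 * ((1 + 1) * (a * 1))) * l * / (m * (m * 1)) = (X - 1) * 2 / a)
    by (unfold X; field; lra).
  auto_derive; rewrite EX; [repeat split; lra|].
  rewrite EL; set (S := sqrt X) in *; rewrite <- HSS; unfold dkappa; field; lra.
Qed.

Lemma Derive_kappa a : 0 < a ->
  Derive (fun b => kappa m b l) a = dkappa (kappa m a l) a.
Proof. intros ha; exact (is_derive_unique _ _ _ (is_derive_kappa a ha)). Qed.

Lemma pp_pos a : 0 < a -> 0 < pp m a l.
Proof.
  intros ha; pose proof (kappa_bounds a ha); pose proof (pow_lt a 2 ha).
  apply Rdiv_lt_0_compat; [lra | nra].
Qed.

Lemma is_derive_pp a : 0 < a ->
  is_derive (fun b => pp m b l) a (- (pp m a l / a) * (1 + kappa m a l ^ 2)).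
Proof.
  intros ha; pose proof (kappa_bounds a ha).
  unfold pp at 1; auto_derive.
  - split; [eexists; apply is_derive_kappa; exact ha|].
    split; [|exact I]; apply Rmult_integral_contrapositive; split; [|lra].
    pose proof (pow_lt a 2 ha); simpl in *; lra.
  - rewrite Derive_kappa by exact ha; unfold pp, dkappa; field; lra.
Qed.

Lemma Derive_pp a : 0 < a ->
  Derive (fun b => pp m b l) a = - (pp m a l / a) * (1 + kappa m a l ^ 2).
Proof. intros ha; exact (is_derive_unique _ _ _ (is_derive_pp a ha)). Qed.

End KappaPDerivatives.

(* [Rt = p (cosh u - k)] for [u = Ru] and [k = kappa] (lemma [Rt_eq]); [Ru_a] and the [Rt_*] are
   the closed forms of the derivatives of [u] and [Rt] in the indicated variables, and
   [Rt_a_corr_u], [Rt_a_corr_k] are the partial derivatives of [Rt_a_corr] in [u] and [k]. *)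
Definition Ru (m t th a l : R) : R := U (kappa m a l) ((th + a * t) / pp m a l).

Definition Ru_a (k u p a t : R) : R :=
  (t / p + (sinh u - k * u) / a * (1 + k ^ 2) + u * dkappa k a) / (cosh u - k).

Definition Rt_th (k u : R) : R := sinh u / (cosh u - k).

Definition Rt_a_corr (k u : R) : R :=
  3 * k + k ^ 3 - (1 - k ^ 4) / (cosh u - k) - 2 * k * u * sinh u / (cosh u - k).

Definition Rt_a_corr_u (k u : R) : R :=
  (1 - k ^ 4) * sinh u / (cosh u - k) ^ 2 - 2 * k * (sinh u + u * cosh u) / (cosh u - k)
  + 2 * k * u * sinh u ^ 2 / (cosh u - k) ^ 2.

Definition Rt_a_corr_k (k u : R) : R :=
  3 + 3 * k ^ 2 + 4 * k ^ 3 / (cosh u - k) - (1 - k ^ 4) / (cosh u - k) ^ 2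
  - 2 * u * sinh u / (cosh u - k) - 2 * k * u * sinh u / (cosh u - k) ^ 2.

Definition Rt_a (k u p a t : R) : R := t * Rt_th k u + p / a * Rt_a_corr k u.

Definition Rt_thth (k u p : R) : R := (1 - k * cosh u) / (p * (cosh u - k) ^ 3).

Definition Rt_tha (k u p a t : R) : R :=
  (1 - k * cosh u) / (cosh u - k) ^ 2 * Ru_a k u p a t + sinh u / (cosh u - k) ^ 2 * dkappa k a.

Definition Rt_aa (k u p a t : R) : R :=
  t * Rt_tha k u p a t - p / a ^ 2 * (2 + k ^ 2) * Rt_a_corr k u
  + p / a * (Rt_a_corr_u k u * Ru_a k u p a t + Rt_a_corr_k k u * dkappa k a).

Lemma exp_cosh_sub_pos k u : k < 1 -> 0 < exp u * exp u + 1 - k * (exp u * 2).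
Proof.
  intros Hk; pose proof (cosh_sub_pos k u Hk); pose proof (exp_pos u).
  replace (exp u * exp u + 1 - k * (exp u * 2)) with (2 * exp u * (cosh u - k))
    by (unfold cosh; rewrite exp_Ropp; field; lra).
  nra.
Qed.

(* Writing [cosh u], [sinh u] as rational functions of [exp u] lets [field] use
   [cosh u ^ 2 - sinh u ^ 2 = 1]. *)
Ltac field_exp u k :=
  pose proof (exp_pos u); pose proof (exp_cosh_sub_pos k u ltac:(lra));
  unfold cosh, sinh; rewrite (exp_Ropp u); field; repeat split; lra.

Lemma Derive_of_locally (f g : R -> R) (x l : R) :
  locally x (fun z => g z = f z) -> is_derive g x l -> Derive f x = l.
Proof. intros Hfg Hg; apply is_derive_unique; exact (is_derive_ext_loc g f x l Hfg Hg). Qed.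

Section RtDerivatives.

Variables (m t l : R).
Hypotheses (hm : 0 < m) (hl : 0 < l) (ht : 0 < t).

Local Notation k a := (kappa m a l).
Local Notation p a := (pp m a l).
Local Notation u th a := (Ru m t th a l).

Lemma Ru_spec th a : 0 < a -> 0 < th + a * t ->
  0 < u th a /\ sinh (u th a) - k a * u th a = (th + a * t) / p a.
Proof.
  intros ha hs; apply U_spec; [apply kappa_bounds; assumption|].
  apply Rdiv_lt_0_compat; [exact hs | apply pp_pos; assumption].
Qed.

Lemma Ru_bounds th a : 0 < a -> Rabs th <= a * t / 2 ->
  0 < u th a /\ a * t <= 2 * p a * (sinh (u th a) - k a * u th a) <= 3 * a * t.
Proof.
  intros ha hth; apply Rabs_le_between in hth.
  destruct (Ru_spec th a ha ltac:(nra)) as [hu ->]; pose proof (pp_pos m l hm hl a ha).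
  replace (2 * p a * ((th + a * t) / p a)) with (2 * (th + a * t)) by (field; lra).
  repeat split; [exact hu | nra | nra].
Qed.

Lemma locally_th th a : 0 < th + a * t -> locally th (fun x => 0 < x + a * t).
Proof.
  intros hs; exists (mkposreal _ hs); intros x Hx; change (Rabs (x - th) < th + a * t) in Hx.
  apply Rabs_def2 in Hx; lra.
Qed.

Lemma locally_a th a : 0 < a -> 0 < th + a * t -> locally a (fun x => 0 < x /\ 0 < th + x * t).
Proof.
  intros ha hs.
  assert (Hr : 0 < Rmin a ((th + a * t) / t)) by (apply Rmin_pos; [|apply Rdiv_lt_0_compat]; lra).
  exists (mkposreal _ Hr); intros x Hx; change (Rabs (x - a) < Rmin a ((th + a * t) / t)) in Hx.
  apply Rabs_def2 in Hx; pose proof (Rmin_l a ((th + a * t) / t));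
    pose proof (Rmin_r a ((th + a * t) / t)).
  assert (Hax : (a - x) * t < (th + a * t) / t * t) by (apply Rmult_lt_compat_r; lra).
  replace ((th + a * t) / t * t) with (th + a * t) in Hax by (field; lra).
  split; nra.
Qed.

Lemma is_derive_Ru_th th a : 0 < a -> 0 < th + a * t ->
  is_derive (fun x => u x a) th (/ (p a * (cosh (u th a) - k a))).
Proof.
  intros ha hs; pose proof (kappa_bounds m l hm hl a ha); pose proof (pp_pos m l hm hl a ha).
  pose proof (cosh_sub_pos (k a) (u th a) ltac:(lra)).
  replace (/ (p a * (cosh (u th a) - k a)))
    with ((0 * u th a + / p a) / (cosh (u th a) - k a)) by (field; lra).
  apply (is_derive_implicit sinh (fun _ => k a) (fun x => (x + a * t) / p a) (fun x => u x a)).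
  - exact expanding_sinh.
  - apply is_derive_Reals, derivable_pt_lim_sinh.
  - exact (is_derive_const (k a) th).
  - auto_derive; [lra | field; lra].
  - lra.
  - eapply filter_imp; [|exact (locally_th th a hs)]; intros x Hx; apply Ru_spec; assumption.
Qed.

Lemma is_derive_Ru_a th a : 0 < a -> 0 < th + a * t ->
  is_derive (fun x => u th x) a (Ru_a (k a) (u th a) (p a) a t).
Proof.
  intros ha hs; pose proof (kappa_bounds m l hm hl a ha); pose proof (pp_pos m l hm hl a ha).
  pose proof (cosh_sub_pos (k a) (u th a) ltac:(lra)).
  assert (Hy : is_derive (fun x => (th + x * t) / p x) a
                 (t / p a + (sinh (u th a) - k a * u th a) / a * (1 + k a ^ 2))).
  { rewrite (proj2 (Ru_spec th a ha hs)); auto_derive.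
    - split; [eexists; apply is_derive_pp; assumption | split; [lra | exact I]].
    - rewrite Derive_pp by assumption; field; lra. }
  replace (Ru_a (k a) (u th a) (p a) a t) with
    ((dkappa (k a) a * u th a + (t / p a + (sinh (u th a) - k a * u th a) / a * (1 + k a ^ 2)))
       / (cosh (u th a) - k a)) by (unfold Ru_a; f_equal; ring).
  apply (is_derive_implicit sinh (fun x => k x) (fun x => (th + x * t) / p x) (fun x => u th x)).
  - exact expanding_sinh.
  - apply is_derive_Reals, derivable_pt_lim_sinh.
  - apply is_derive_kappa; assumption.
  - exact Hy.
  - lra.
  - eapply filter_imp; [|exact (locally_a th a ha hs)]; intros x [Hx Hxs].
    apply Ru_spec; assumption.
Qed.

Lemma Derive_Ru_th th a : 0 < a -> 0 < th + a * t ->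
  Derive (fun x => u x a) th = / (p a * (cosh (u th a) - k a)).
Proof. intros ha hs; exact (is_derive_unique _ _ _ (is_derive_Ru_th th a ha hs)). Qed.

Lemma Derive_Ru_a th a : 0 < a -> 0 < th + a * t ->
  Derive (fun x => u th x) a = Ru_a (k a) (u th a) (p a) a t.
Proof. intros ha hs; exact (is_derive_unique _ _ _ (is_derive_Ru_a th a ha hs)). Qed.

(* Matching syntactically keeps [apply] from unfolding [Ru] and [kappa] during unification. *)
Ltac solve_ex_derive := repeat split; try match goal with
  | |- ex_derive (fun x => Ru _ _ _ x _) _ => eexists; apply is_derive_Ru_a; assumption
  | |- ex_derive (fun x => Ru _ _ x _ _) _ => eexists; apply is_derive_Ru_th; assumption
  | |- ex_derive (fun x => kappa _ x _) _ => eexists; apply is_derive_kappa; assumption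
  | |- ex_derive (fun x => pp _ x _) _ => eexists; apply is_derive_pp; assumption
  end; try lra.

Lemma Rt_eq th a : 0 < a -> 0 < th + a * t -> Rt m t th a l = p a * (cosh (u th a) - k a).
Proof.
  intros ha hs; pose proof (kappa_bounds m l hm hl a ha); pose proof (pp_pos m l hm hl a ha).
  unfold Rt, RR; rewrite Rabs_right, H_cosh_U by (try apply Rdiv_lt_0_compat; lra).
  unfold Ru; ring.
Qed.

Lemma is_derive_Rt_th th a : 0 < a -> 0 < th + a * t ->
  is_derive (fun x => p a * (cosh (u x a) - k a)) th (Rt_th (k a) (u th a)).
Proof.
  intros ha hs; pose proof (kappa_bounds m l hm hl a ha); pose proof (pp_pos m l hm hl a ha).
  pose proof (cosh_sub_pos (k a) (u th a) ltac:(lra)).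
  auto_derive; [solve_ex_derive|].
  rewrite Derive_Ru_th by assumption; unfold Rt_th; field; lra.
Qed.

Lemma is_derive_Rt_a th a : 0 < a -> 0 < th + a * t ->
  is_derive (fun x => p x * (cosh (u th x) - k x)) a (Rt_a (k a) (u th a) (p a) a t).
Proof.
  intros ha hs; pose proof (kappa_bounds m l hm hl a ha); pose proof (pp_pos m l hm hl a ha).
  auto_derive; [solve_ex_derive|].
  rewrite Derive_pp, Derive_Ru_a, Derive_kappa by assumption.
  unfold Rt_a, Rt_th, Rt_a_corr, Ru_a, dkappa; field_exp (u th a) (k a).
Qed.

Lemma is_derive_Rt_thth th a : 0 < a -> 0 < th + a * t ->
  is_derive (fun x => Rt_th (k a) (u x a)) th (Rt_thth (k a) (u th a) (p a)).
Proof.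
  intros ha hs; pose proof (kappa_bounds m l hm hl a ha); pose proof (pp_pos m l hm hl a ha).
  pose proof (cosh_sub_pos (k a) (u th a) ltac:(lra)).
  unfold Rt_th; auto_derive; [solve_ex_derive|].
  rewrite Derive_Ru_th by assumption; unfold Rt_thth; field_exp (u th a) (k a).
Qed.

Lemma is_derive_Rt_tha th a : 0 < a -> 0 < th + a * t ->
  is_derive (fun x => Rt_th (k x) (u th x)) a (Rt_tha (k a) (u th a) (p a) a t).
Proof.
  intros ha hs; pose proof (kappa_bounds m l hm hl a ha); pose proof (pp_pos m l hm hl a ha).
  pose proof (cosh_sub_pos (k a) (u th a) ltac:(lra)).
  unfold Rt_th; auto_derive; [solve_ex_derive|].
  rewrite Derive_Ru_a, Derive_kappa by assumption; unfold Rt_tha.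
  field_exp (u th a) (k a).
Qed.

Lemma is_derive_Rt_a_corr th a : 0 < a -> 0 < th + a * t ->
  is_derive (fun x => Rt_a_corr (k x) (u th x)) a
    (Rt_a_corr_u (k a) (u th a) * Ru_a (k a) (u th a) (p a) a t
     + Rt_a_corr_k (k a) (u th a) * dkappa (k a) a).
Proof.
  intros ha hs; pose proof (kappa_bounds m l hm hl a ha).
  pose proof (cosh_sub_pos (k a) (u th a) ltac:(lra)).
  unfold Rt_a_corr; auto_derive; [solve_ex_derive|].
  rewrite Derive_Ru_a, Derive_kappa by assumption.
  unfold Rt_a_corr_u, Rt_a_corr_k; field; lra.
Qed.

Lemma is_derive_Rt_aa th a : 0 < a -> 0 < th + a * t ->
  is_derive (fun x => Rt_a (k x) (u th x) (p x) x t) a (Rt_aa (k a) (u th a) (p a) a t).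
Proof.
  intros ha hs; pose proof (kappa_bounds m l hm hl a ha); pose proof (pp_pos m l hm hl a ha).
  set (f x := Rt_th (k x) (u th x)); set (g x := Rt_a_corr (k x) (u th x)).
  assert (Hf : is_derive f a (Rt_tha (k a) (u th a) (p a) a t))
    by (apply is_derive_Rt_tha; assumption).
  assert (Hg := is_derive_Rt_a_corr th a ha hs); fold g in Hg.
  apply (is_derive_ext (fun x => t * f x + p x / x * g x)); [reflexivity|].
  auto_derive.
  - solve_ex_derive; eexists; eassumption.
  - rewrite Derive_pp, (is_derive_unique (fun x : R => f x) _ _ Hf),
      (is_derive_unique (fun x : R => g x) _ _ Hg) by assumption.
    unfold Rt_aa, f, g; field; lra.
Qed.

Lemma Derive_Rt_th th a : 0 < a -> 0 < th + a * t ->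
  Derive (fun x => Rt m t x a l) th = Rt_th (k a) (u th a).
Proof.
  intros ha hs; apply (Derive_of_locally _ (fun x => p a * (cosh (u x a) - k a))).
  - eapply filter_imp; [|exact (locally_th th a hs)]; intros x Hx; symmetry; apply Rt_eq; lra.
  - apply is_derive_Rt_th; assumption.
Qed.

Lemma Derive_Rt_a th a : 0 < a -> 0 < th + a * t ->
  Derive (fun x => Rt m t th x l) a = Rt_a (k a) (u th a) (p a) a t.
Proof.
  intros ha hs; apply (Derive_of_locally _ (fun x => p x * (cosh (u th x) - k x))).
  - eapply filter_imp; [|exact (locally_a th a ha hs)]; intros x [Hx Hxs]; symmetry.
    apply Rt_eq; assumption.
  - apply is_derive_Rt_a; assumption.
Qed.

Lemma Derive2_Rt_thth th a : 0 < a -> 0 < th + a * t ->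
  Derive (fun x => Derive (fun y => Rt m t y a l) x) th = Rt_thth (k a) (u th a) (p a).
Proof.
  intros ha hs; apply (Derive_of_locally _ (fun x => Rt_th (k a) (u x a))).
  - eapply filter_imp; [|exact (locally_th th a hs)]; intros x Hx; symmetry.
    apply Derive_Rt_th; assumption.
  - apply is_derive_Rt_thth; assumption.
Qed.

Lemma Derive2_Rt_tha th a : 0 < a -> 0 < th + a * t ->
  Derive (fun x => Derive (fun y => Rt m t y x l) th) a = Rt_tha (k a) (u th a) (p a) a t.
Proof.
  intros ha hs; apply (Derive_of_locally _ (fun x => Rt_th (k x) (u th x))).
  - eapply filter_imp; [|exact (locally_a th a ha hs)]; intros x [Hx Hxs]; symmetry.
    apply Derive_Rt_th; assumption.
  - apply is_derive_Rt_tha; assumption.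
Qed.

Lemma Derive2_Rt_aa th a : 0 < a -> 0 < th + a * t ->
  Derive (fun x => Derive (fun y => Rt m t th y l) x) a = Rt_aa (k a) (u th a) (p a) a t.
Proof.
  intros ha hs; apply (Derive_of_locally _ (fun x => Rt_a (k x) (u th x) (p x) x t)).
  - eapply filter_imp; [|exact (locally_a th a ha hs)]; intros x [Hx Hxs]; symmetry.
    apply Derive_Rt_a; assumption.
  - apply is_derive_Rt_aa; assumption.
Qed.

End RtDerivatives.

Lemma ln_le_sub_1 x : 0 < x -> ln x <= x - 1.
Proof. intros Hx; pose proof (exp_ineq1_le (ln x)); rewrite exp_ln in *; lra. Qed.

Lemma jb_ge x : 4 / 3 <= jb x.
Proof.
  unfold jb; replace (4 / 3) with (sqrt ((4 / 3) ^ 2)) by (apply sqrt_pow2; lra).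
  apply sqrt_le_1_alt; pose proof (pow2_ge_0 x); lra.
Qed.

Lemma jb_ge_id x : 0 <= x -> x <= jb x.
Proof.
  intros Hx; unfold jb; rewrite <- (sqrt_pow2 x) at 1 by exact Hx; apply sqrt_le_1_alt; lra.
Qed.

Lemma two_ln_jb x : 2 * ln (jb x) = ln (2 + x ^ 2).
Proof.
  unfold jb; pose proof (pow2_ge_0 x); pose proof (sqrt_lt_R0 (2 + x ^ 2) ltac:(lra)).
  rewrite <- (sqrt_sqrt (2 + x ^ 2)) at 2 by lra; rewrite ln_mult by lra; ring.
Qed.

Lemma ln_jb_ge x : 1 / 4 <= ln (jb x).
Proof.
  pose proof (jb_ge x); pose proof (ln_le_sub_1 (/ jb x) ltac:(apply Rinv_0_lt_compat; lra)).
  rewrite ln_Rinv in * by lra.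
  assert (/ jb x <= 3 / 4)
    by (replace (3 / 4) with (/ (4 / 3)) by field; apply Rinv_le_contravar; lra).
  lra.
Qed.

(* From [exp u <= 10 (1 + y)] and [y <= 3 t / (2 r)]:
   [u <= ln 10 + ln (1 + 3 t / 2) + ln (1 + 1 / r)], and [r ln (1 + 1 / r) <= 1]. *)
Lemma mul_one_add_le_jb_ln r t u y : 0 < r -> 0 < t -> 0 < y -> 0 <= u ->
  exp u <= 10 * (1 + y) -> 2 * r * y <= 3 * t -> r * (1 + u) <= 50 * (jb r * ln (jb t)).
Proof.
  intros hr ht hy hu hE hry; pose proof (Rinv_0_lt_compat r hr).
  assert (H1 : u <= ln (10 * (1 + y)))
    by (rewrite <- (ln_exp u) at 1; apply ln_le; [apply exp_pos | exact hE]).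
  assert (H2 : 1 + y <= (1 + 3 / 2 * t) * (1 + / r)).
  { assert (y <= 3 / 2 * t * / r)
      by (apply (Rmult_le_reg_r r); [lra|]; rewrite Rmult_assoc, Rinv_l; lra).
    nra. }
  assert (H3 : ln (10 * (1 + y)) <= ln 10 + ln (1 + 3 / 2 * t) + ln (1 + / r))
    by (rewrite <- !ln_mult by nra; apply ln_le; lra).
  assert (H4 : ln 10 <= 9) by (pose proof (ln_le_sub_1 10); lra).
  assert (H5 : ln (1 + 3 / 2 * t) <= 2 * ln (jb t)).
  { rewrite two_ln_jb; apply ln_le; [lra|]; pose proof (pow2_ge_0 (t - 3 / 4)); nra. }
  assert (H6 : r * ln (1 + / r) <= 1).
  { pose proof (ln_le_sub_1 (1 + / r) ltac:(lra)).
    apply Rle_trans with (r * / r); [apply Rmult_le_compat_l; lra | rewrite Rinv_r; lra]. }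
  pose proof (ln_jb_ge t); pose proof (jb_ge_id r (Rlt_le _ _ hr)); pose proof (jb_ge r).
  set (L := ln (jb t)) in *; set (J := jb r) in *.
  assert (r * (1 + u) <= 10 * r + 2 * r * L + 1) by nra.
  nra.
Qed.

Lemma abs1_mul_le x z b : Rabs x <= 1 -> 0 <= z -> z <= b -> Rabs (x * z) <= b.
Proof.
  intros Hx Hz Hzb; rewrite Rabs_mult, (Rabs_right z) by lra.
  apply Rle_trans with (1 * z); [apply Rmult_le_compat_r|]; lra.
Qed.

Lemma Rabs_mul_nonneg_weight z w x v : 0 <= z -> 0 <= w -> 0 <= v ->
  Rabs (z * (w * x) * v) = z * v * (w * Rabs x).
Proof. intros; rewrite !Rabs_mult, (Rabs_right z), (Rabs_right w), (Rabs_right v) by lra; ring. Qed.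

Section Estimates.

Variables (k u : R).
Hypotheses (k_pos : 0 < k) (k_lt_1 : k < 1) (u_pos : 0 < u).

Local Notation c := (cosh u).
Local Notation s := (sinh u).

(* Facts about [c] and [s] used by [nra] from the context. *)
Let c_ge_1 : 1 <= c := cosh_ge_1 u.
Let c_sq_sub_s_sq : c * c - s * s = 1 := cosh_sq_sub_sinh_sq u.
Let u_le_s : u <= s := sinh_ge_id u (Rlt_le _ _ u_pos).
Let c_sub_s_le_1 : c - s <= 1 := cosh_sub_sinh_le_1 u (Rlt_le _ _ u_pos).
Let c_sub_s_pos : 0 < c - s := cosh_sub_sinh_pos u.
Let s_le_u_c : s <= u * c := sinh_le_mul_cosh u (Rlt_le _ _ u_pos).

(* [y] is the argument [(th + a t) / p] of [H] and [p D] is [Rt]. *)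
Let D := c - k.
Let y := s - k * u.
Let iD := / D.

Lemma D_pos : 0 < D. Proof. unfold D; lra. Qed.
Lemma y_pos : 0 < y. Proof. unfold y; nra. Qed.
Lemma y_le_D : y <= D. Proof. unfold y, D; destruct (Rle_lt_dec 1 u); nra. Qed.
Lemma one_sub_k_cosh_le_D : (1 - k) * c <= D. Proof. unfold D; nra. Qed.

Lemma iD_pos : 0 < iD. Proof. exact (Rinv_0_lt_compat _ D_pos). Qed.
Lemma D_iD : D * iD = 1. Proof. apply Rinv_r; pose proof D_pos; lra. Qed.

Lemma le_D_iD x b : x <= b * D -> x * iD <= b.
Proof.
  intros H; pose proof iD_pos; pose proof D_iD.
  apply Rle_trans with (b * D * iD);
    [apply Rmult_le_compat_r; lra | rewrite Rmult_assoc, D_iD; lra].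
Qed.

Lemma one_sub_k_iD_le_1 : (1 - k) * iD <= 1.
Proof. apply le_D_iD; unfold D; lra. Qed.
Lemma y_iD_le_1 : y * iD <= 1.
Proof. apply le_D_iD; pose proof y_le_D; lra. Qed.
Lemma y_iD_le_u : y * iD <= u.
Proof. apply le_D_iD; unfold y, D; nra. Qed.
Lemma u_one_sub_k_iD_le_1 : u * (1 - k) * iD <= 1.
Proof. apply le_D_iD; pose proof one_sub_k_cosh_le_D; nra. Qed.
Lemma u_one_sub_k_iD_le_u : u * (1 - k) * iD <= u.
Proof. pose proof one_sub_k_iD_le_1; nra. Qed.
Lemma sinh_one_sub_k_iD_le_1 : s * (1 - k) * iD <= 1.
Proof. apply le_D_iD; pose proof one_sub_k_cosh_le_D; nra. Qed.
Lemma u_sinh_iD_le : u * s * iD <= u + 2.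
Proof. apply le_D_iD; unfold D; nra. Qed.
Lemma abs_one_sub_k_cosh_iD_le_1 : Rabs (1 - k * c) * iD <= 1.
Proof. apply le_D_iD; rewrite Rmult_1_l; apply Rabs_le; unfold D; split; nra. Qed.
Lemma y_iD_ge_0 : 0 <= y * iD.
Proof. pose proof y_pos; pose proof iD_pos; nra. Qed.
Lemma u_one_sub_k_iD_ge_0 : 0 <= u * (1 - k) * iD.
Proof. pose proof iD_pos; apply Rmult_le_pos; nra. Qed.

Lemma Rt_a_corr_eq : Rt_a_corr k u = 3 * k + k ^ 3 - (1 - k ^ 4) * iD - 2 * k * u * s * iD.
Proof. pose proof D_pos; unfold Rt_a_corr, iD, D in *; field; lra. Qed.

Lemma Rt_a_corr_u_eq : Rt_a_corr_u k u =
  (1 - k ^ 4) * s * iD ^ 2 - 2 * k * (s + u * c) * iD + 2 * k * u * s ^ 2 * iD ^ 2.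
Proof. pose proof D_pos; unfold Rt_a_corr_u, iD, D in *; field; lra. Qed.

Lemma Rt_a_corr_k_eq : Rt_a_corr_k k u = 3 + 3 * k ^ 2 + 4 * k ^ 3 * iD - (1 - k ^ 4) * iD ^ 2
  - 2 * u * s * iD - 2 * k * u * s * iD ^ 2.
Proof. pose proof D_pos; unfold Rt_a_corr_k, iD, D in *; field; lra. Qed.

Lemma pow_k_bounds n : 0 <= k ^ n <= 1.
Proof. induction n; simpl; [lra | split; nra]. Qed.

Lemma one_sub_pow4_k_bounds : 0 <= 1 - k ^ 4 <= 4 * (1 - k).
Proof.
  pose proof (pow_k_bounds 2); pose proof (pow_k_bounds 3); pose proof (pow_k_bounds 4).
  replace (1 - k ^ 4) with ((1 - k) * (1 + k + k ^ 2 + k ^ 3)) by ring.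
  split; [apply Rmult_le_pos|]; nra.
Qed.

Lemma u_sq_iD_le : u * u * iD <= u + 2.
Proof. pose proof u_sinh_iD_le; pose proof iD_pos; nra. Qed.

Lemma cosh_le_2 : u < 1 / 2 -> c <= 2.
Proof. intros; nra. Qed.

Lemma cosh_iD_le : 1 / 2 <= u -> c * iD <= 10.
Proof.
  intros; apply le_D_iD.
  assert (c * c >= 5 / 4) by nra; assert (c >= 10 / 9) by nra.
  unfold D; nra.
Qed.

Lemma weighted_corr_u_first w : 0 <= w -> w <= u -> w * ((1 - k ^ 4) * s * iD ^ 2) <= 4 * (u + 2).
Proof.
  intros Hw Hwu; pose proof iD_pos; pose proof u_sinh_iD_le; pose proof one_sub_k_iD_le_1.
  pose proof one_sub_pow4_k_bounds.
  assert (A : 0 <= u * s * iD) by (apply Rmult_le_pos; [apply Rmult_le_pos|]; lra).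
  assert (B : 0 <= (1 - k ^ 4) * iD <= 4) by (split; nra).
  apply Rle_trans with (u * ((1 - k ^ 4) * s * iD ^ 2)).
  { apply Rmult_le_compat_r; [|exact Hwu]; apply Rmult_le_pos; [apply Rmult_le_pos; lra | nra]. }
  replace (u * ((1 - k ^ 4) * s * iD ^ 2)) with ((u * s * iD) * ((1 - k ^ 4) * iD)) by ring.
  rewrite (Rmult_comm 4); apply Rmult_le_compat; lra.
Qed.

Lemma weighted_corr_u_second w : 0 <= w -> w <= 1 -> w <= u ->
  w * (2 * k * (s + u * c) * iD) <= 20 * (1 + u).
Proof.
  intros Hw Hw1 Hwu; pose proof iD_pos; pose proof u_sinh_iD_le; pose proof u_sq_iD_le.
  assert (HB : 0 <= 2 * k * (s + u * c) * iD) by (apply Rmult_le_pos; [|lra]; nra).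
  destruct (Rlt_le_dec u (1 / 2)) as [Hu | Hu].
  - pose proof (cosh_le_2 Hu).
    apply Rle_trans with (u * (2 * k * (s + u * c) * iD)); [apply Rmult_le_compat_r; lra|].
    assert (u * u * c * iD <= 2 * (u + 2)).
    { replace (u * u * c * iD) with ((u * u * iD) * c) by ring.
      apply Rle_trans with ((u + 2) * 2); [apply Rmult_le_compat; nra | lra]. }
    assert (0 <= u * s * iD) by (apply Rmult_le_pos; [apply Rmult_le_pos|]; lra).
    assert (0 <= u * u * c * iD) by (apply Rmult_le_pos; [apply Rmult_le_pos|]; nra).
    replace (u * (2 * k * (s + u * c) * iD)) with (k * (2 * (u * s * iD) + 2 * (u * u * c * iD)))
      by ring.
    nra.
  - pose proof (cosh_iD_le Hu).
    apply Rle_trans with (1 * (2 * k * (s + u * c) * iD)); [apply Rmult_le_compat_r; lra|].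
    assert (s * iD <= c * iD) by (apply Rmult_le_compat_r; lra).
    assert (0 <= (s + u * c) * iD) by nra.
    assert (2 * k * (s + u * c) * iD <= 2 * (1 + u) * (c * iD)) by nra.
    nra.
Qed.

Lemma weighted_corr_u_third w : 0 <= w -> w <= 1 -> w <= u ->
  w * (2 * k * u * s ^ 2 * iD ^ 2) <= 200 * (1 + u).
Proof.
  intros Hw Hw1 Hwu; pose proof iD_pos; pose proof u_sinh_iD_le.
  assert (HC : 0 <= 2 * k * u * s ^ 2 * iD ^ 2)
    by (apply Rmult_le_pos; [|nra]; apply Rmult_le_pos; nra).
  destruct (Rlt_le_dec u (1 / 2)) as [Hu | Hu].
  - apply Rle_trans with (u * (2 * k * u * s ^ 2 * iD ^ 2)); [apply Rmult_le_compat_r; lra|].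
    replace (u * (2 * k * u * s ^ 2 * iD ^ 2)) with (2 * k * (u * s * iD) ^ 2) by ring.
    assert (0 <= u * s * iD) by (apply Rmult_le_pos; nra).
    assert ((u * s * iD) ^ 2 <= (u + 2) ^ 2) by (apply pow_incr; lra).
    nra.
  - pose proof (cosh_iD_le Hu).
    apply Rle_trans with (1 * (2 * k * u * s ^ 2 * iD ^ 2)); [apply Rmult_le_compat_r; lra|].
    assert (0 <= s * iD) by nra; assert (s * iD <= 10) by nra.
    assert ((s * iD) ^ 2 <= 100) by nra.
    replace (1 * (2 * k * u * s ^ 2 * iD ^ 2)) with ((2 * u) * (k * (s * iD) ^ 2)) by ring.
    assert (0 <= (s * iD) ^ 2) by apply pow2_ge_0.
    assert (k * (s * iD) ^ 2 <= 100) by nra.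
    apply Rle_trans with ((2 * u) * 100); [apply Rmult_le_compat_l|]; lra.
Qed.

Lemma weighted_abs_Rt_a_corr_u_le w : 0 <= w -> w <= 1 -> w <= u ->
  w * Rabs (Rt_a_corr_u k u) <= 228 * (1 + u).
Proof.
  intros Hw Hw1 Hwu; rewrite Rt_a_corr_u_eq.
  pose proof iD_pos; pose proof one_sub_pow4_k_bounds.
  pose proof (weighted_corr_u_first w Hw Hwu).
  pose proof (weighted_corr_u_second w Hw Hw1 Hwu).
  pose proof (weighted_corr_u_third w Hw Hw1 Hwu).
  set (A := (1 - k ^ 4) * s * iD ^ 2) in *.
  set (B := 2 * k * (s + u * c) * iD) in *.
  set (C := 2 * k * u * s ^ 2 * iD ^ 2) in *.
  assert (0 <= A) by (apply Rmult_le_pos; [|nra]; nra).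
  assert (0 <= B) by (apply Rmult_le_pos; [|lra]; nra).
  assert (0 <= C) by (apply Rmult_le_pos; [|nra]; apply Rmult_le_pos; nra).
  assert (Rabs (A - B + C) <= A + B + C) by (apply Rabs_le; lra).
  apply Rle_trans with (w * (A + B + C)); [apply Rmult_le_compat_l; lra | nra].
Qed.

Lemma abs_Rt_a_corr_le : Rabs (Rt_a_corr k u) <= 2 * u + 12.
Proof.
  rewrite Rt_a_corr_eq; pose proof iD_pos; pose proof one_sub_pow4_k_bounds.
  pose proof u_sinh_iD_le; pose proof one_sub_k_iD_le_1.
  assert (0 <= u * s * iD) by (apply Rmult_le_pos; nra).
  assert (0 <= (1 - k ^ 4) * iD <= 4) by (split; nra).
  assert (0 <= k * (u * s * iD) <= u + 2) by (split; nra).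
  assert (0 <= k ^ 3 <= 1) by apply pow_k_bounds.
  apply Rabs_le; split; nra.
Qed.

Lemma abs_Rt_a_corr_k_le : k * (1 - k ^ 2) * Rabs (Rt_a_corr_k k u) <= 38 * (1 + u).
Proof.
  rewrite Rt_a_corr_k_eq; pose proof iD_pos; pose proof one_sub_pow4_k_bounds.
  pose proof u_sinh_iD_le; pose proof one_sub_k_iD_le_1.
  set (T := 3 + 3 * k ^ 2 + 4 * k ^ 3 * iD + (1 - k ^ 4) * iD ^ 2 + 2 * u * s * iD
            + 2 * k * u * s * iD ^ 2).
  assert (Hk3 : 0 <= k ^ 3) by (apply pow_le; lra).
  assert (HusiD : 0 <= u * s * iD) by (apply Rmult_le_pos; nra).
  assert (Rabs (3 + 3 * k ^ 2 + 4 * k ^ 3 * iD - (1 - k ^ 4) * iD ^ 2 - 2 * u * s * iD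
                - 2 * k * u * s * iD ^ 2) <= T).
  { unfold T; apply Rabs_le; split; [|nra].
    assert (0 <= (1 - k ^ 4) * iD ^ 2) by nra.
    assert (0 <= k * u * s * iD ^ 2) by (apply Rmult_le_pos; [|nra]; nra).
    nra. }
  assert (0 <= k * (1 - k ^ 2)) by nra.
  apply Rle_trans with (k * (1 - k ^ 2) * T); [apply Rmult_le_compat_l; assumption|].
  assert (E1 : k * (1 - k ^ 2) * (3 + 3 * k ^ 2) <= 6) by nra.
  assert (E2 : k * (1 - k ^ 2) * (4 * k ^ 3 * iD) <= 8).
  { replace (k * (1 - k ^ 2) * (4 * k ^ 3 * iD)) with (4 * (k ^ 4 * (1 + k)) * ((1 - k) * iD))
      by ring.
    assert (k ^ 4 * (1 + k) <= 2) by nra; assert (0 <= (1 - k) * iD) by nra; nra. }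
  assert (E3 : k * (1 - k ^ 2) * ((1 - k ^ 4) * iD ^ 2) <= 8).
  { replace (k * (1 - k ^ 2) * ((1 - k ^ 4) * iD ^ 2))
      with ((k * (1 + k) * (1 + k) * (1 + k ^ 2)) * ((1 - k) * iD) ^ 2) by ring.
    assert (0 <= k * (1 + k) * (1 + k) * (1 + k ^ 2) <= 8) by (split; nra).
    assert (0 <= (1 - k) * iD) by (apply Rmult_le_pos; lra).
    assert (((1 - k) * iD) ^ 2 <= 1) by (rewrite <- (pow1 2); apply pow_incr; lra).
    rewrite <- (Rmult_1_r 8); apply Rmult_le_compat; try lra; apply pow2_ge_0. }
  assert (E4 : k * (1 - k ^ 2) * (2 * u * s * iD) <= 4 * (u + 2)).
  { replace (k * (1 - k ^ 2) * (2 * u * s * iD)) with (2 * (k * (1 + k) * (1 - k)) * (u * s * iD))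
      by ring.
    assert (0 <= k * (1 + k) * (1 - k) <= 2) by nra; nra. }
  assert (E5 : k * (1 - k ^ 2) * (2 * k * u * s * iD ^ 2) <= 4 * (u + 2)).
  { replace (k * (1 - k ^ 2) * (2 * k * u * s * iD ^ 2))
      with (2 * (k * k * (1 + k)) * ((1 - k) * iD) * (u * s * iD)) by ring.
    assert (0 <= k * k * (1 + k) <= 2) by nra; assert (0 <= (1 - k) * iD) by nra.
    assert (0 <= ((1 - k) * iD) * (u * s * iD) <= u + 2) by (split; nra); nra. }
  unfold T; nra.
Qed.

Lemma exp_le_y : exp u <= 10 * (1 + y).
Proof. pose proof (exp_le_sinh_sub u (Rlt_le _ _ u_pos)); unfold y; nra. Qed.

Variables (p a t : R).
Hypotheses (p_pos : 0 < p) (a_pos : 0 < a) (t_pos : 0 < t)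
  (py_lower : a * t <= 2 * p * y) (py_upper : 2 * p * y <= 3 * a * t).

Let q := 2 * p / (a * t).

Lemma iD_le_q : iD <= q.
Proof.
  pose proof y_le_D; pose proof iD_pos; pose proof D_iD; unfold q.
  apply Rle_div_r; [nra|].
  apply Rle_trans with (iD * (2 * p * D)); [apply Rmult_le_compat_l; nra|].
  replace (iD * (2 * p * D)) with (2 * p * (D * iD)) by ring; rewrite D_iD; lra.
Qed.

Lemma two_iD_div_a_le : 2 * iD / a <= 4 * (p / (a ^ 2 * t)).
Proof.
  pose proof iD_le_q; unfold q in *.
  replace (4 * (p / (a ^ 2 * t))) with (2 * (2 * p / (a * t)) / a) by (field; lra).
  apply Rmult_le_compat_r; [left; apply Rinv_0_lt_compat|]; lra.
Qed.

Lemma weighted_iD_div_a_le x K : 0 <= x <= 1 -> 0 <= K <= 2 ->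
  0 <= x * iD * K / a <= 4 * (p / (a ^ 2 * t)).
Proof.
  intros Hx HK; pose proof iD_pos; pose proof two_iD_div_a_le.
  assert (0 <= x * K <= 2) by (split; [apply Rmult_le_pos|]; nra).
  assert (0 <= x * iD * K <= 2 * iD).
  { replace (x * iD * K) with (x * K * iD) by ring.
    split; [apply Rmult_le_pos | apply Rmult_le_compat_r]; lra. }
  split; [apply Rdiv_le_0_compat; lra|].
  apply Rle_trans with (2 * iD / a); [apply Rmult_le_compat_r; [left; apply Rinv_0_lt_compat|]|];
    lra.
Qed.

Lemma p_div_a_one_add_u_le : p / a * (1 + u) <= 50 * (jb (p / a) * ln (jb t)).
Proof.
  apply (mul_one_add_le_jb_ln (p / a) t u y); try lra.
  - apply Rdiv_lt_0_compat; lra.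
  - exact y_pos.
  - exact exp_le_y.
  - apply (Rmult_le_reg_r a); [lra|].
    replace (2 * (p / a) * y * a) with (2 * p * y) by (field; lra); lra.
Qed.

Lemma Rt_lower : a * t <= 2 * (p * D).
Proof. pose proof y_le_D; nra. Qed.

Lemma Rt_upper : p * D <= 15 * (p + a * t).
Proof.
  pose proof exp_le_y; rewrite <- cosh_add_sinh in *.
  assert (D <= 10 * (1 + y)) by (unfold D; lra); nra.
Qed.

Lemma abs_sinh_sub_D_le_1 : Rabs (s - D) <= 1.
Proof. unfold D; apply Rabs_le; lra. Qed.

Lemma abs_Rt_th_sub_1_le : Rabs (Rt_th k u - 1) <= 2 * (p / (a * t)).
Proof.
  pose proof iD_pos; pose proof iD_le_q; pose proof abs_sinh_sub_D_le_1; pose proof D_pos.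
  replace (Rt_th k u - 1) with ((s - D) * iD) by (unfold Rt_th, iD, D in *; field; lra).
  rewrite Rabs_mult, (Rabs_right iD) by lra.
  apply Rle_trans with (1 * q); [apply Rmult_le_compat; try lra; apply Rabs_pos|].
  unfold q; lra.
Qed.

Lemma abs_Rt_a_sub_t_le : Rabs (Rt_a k u p a t - t) <= 700 * (jb (p / a) * ln (jb t)).
Proof.
  pose proof iD_pos; pose proof iD_le_q; pose proof abs_sinh_sub_D_le_1; pose proof D_pos.
  pose proof abs_Rt_a_corr_le; pose proof p_div_a_one_add_u_le.
  assert (Hpa : 0 < p / a) by (apply Rdiv_lt_0_compat; lra).
  replace (Rt_a k u p a t - t) with (t * ((s - D) * iD) + p / a * Rt_a_corr k u)
    by (unfold Rt_a, Rt_th, iD, D in *; field; lra).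
  eapply Rle_trans; [apply Rabs_triang|].
  rewrite !Rabs_mult, (Rabs_right iD), (Rabs_right t), (Rabs_right (p / a)) by lra.
  assert (Rabs (s - D) * iD <= q)
    by (apply Rle_trans with (1 * iD); [apply Rmult_le_compat_r|]; lra).
  assert (t * (Rabs (s - D) * iD) <= p / a * 2).
  { apply Rle_trans with (t * q); [apply Rmult_le_compat_l; lra | unfold q; right; field; lra]. }
  assert (p / a * Rabs (Rt_a_corr k u) <= p / a * (2 * u + 12)) by (apply Rmult_le_compat_l; lra).
  nra.
Qed.

Lemma abs_Rt_thth_le : Rabs (Rt_thth k u p) <= 4 * (p / (a ^ 2 * t ^ 2)).
Proof.
  pose proof iD_pos; pose proof iD_le_q; pose proof abs_one_sub_k_cosh_iD_le_1; pose proof D_pos.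
  replace (Rt_thth k u p) with (((1 - k * c) * iD) * iD ^ 2 / p)
    by (unfold Rt_thth, iD, D in *; field; lra).
  unfold Rdiv at 1; rewrite !Rabs_mult, (Rabs_right (iD ^ 2)), (Rabs_right (/ p)), (Rabs_right iD)
    by (try apply Rle_ge, pow_le; try apply Rle_ge, Rlt_le, Rinv_0_lt_compat; lra).
  assert (iD ^ 2 <= q ^ 2) by (apply pow_incr; lra).
  apply Rle_trans with (1 * q ^ 2 * / p).
  - apply Rmult_le_compat_r; [left; apply Rinv_0_lt_compat; lra|].
    apply Rmult_le_compat; try lra; [apply Rmult_le_pos; [apply Rabs_pos|lra] | apply pow_le; lra].
  - unfold q; right; field; lra.
Qed.

Lemma abs_Rt_tha_le : Rabs (Rt_tha k u p a t) <= 16 * (p / (a ^ 2 * t)).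
Proof.
  pose proof iD_pos; pose proof iD_le_q; pose proof D_pos.
  assert (Hkc : Rabs ((1 - k * c) * iD) <= 1)
    by (rewrite Rabs_mult, (Rabs_right iD) by lra; apply abs_one_sub_k_cosh_iD_le_1).
  pose proof y_iD_le_1; pose proof y_iD_ge_0; pose proof u_one_sub_k_iD_le_1;
    pose proof u_one_sub_k_iD_ge_0; pose proof sinh_one_sub_k_iD_le_1.
  assert (0 <= s * (1 - k) * iD) by (apply Rmult_le_pos; [apply Rmult_le_pos|]; lra).
  assert (HkA : 0 <= 1 + k ^ 2 <= 2) by (pose proof (pow_k_bounds 2); lra).
  assert (HkB : 0 <= k * (1 + k) <= 2) by nra.
  replace (Rt_tha k u p a t) with
    (((1 - k * c) * iD) * (iD ^ 2 * t / p) + ((1 - k * c) * iD) * ((y * iD) * iD * (1 + k ^ 2) / a)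
     + - (((1 - k * c) * iD) * ((u * (1 - k) * iD) * iD * (k * (1 + k)) / a))
     + - ((s * (1 - k) * iD) * iD * (k * (1 + k)) / a))
    by (unfold Rt_tha, Ru_a, dkappa, iD, D, y in *; field; lra).
  assert (A1 : Rabs (((1 - k * c) * iD) * (iD ^ 2 * t / p)) <= 4 * (p / (a ^ 2 * t))).
  { apply abs1_mul_le; [exact Hkc | |].
    - apply Rdiv_le_0_compat; [apply Rmult_le_pos; [apply pow_le|]|]; lra.
    - assert (iD ^ 2 <= q ^ 2) by (apply pow_incr; lra).
      apply Rle_trans with (q ^ 2 * t / p).
      + apply Rmult_le_compat_r; [left; apply Rinv_0_lt_compat; lra | apply Rmult_le_compat_r; lra].
      + unfold q; right; field; lra. }
  pose proof (weighted_iD_div_a_le (y * iD) (1 + k ^ 2) ltac:(lra) HkA).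
  pose proof (weighted_iD_div_a_le (u * (1 - k) * iD) (k * (1 + k)) ltac:(lra) HkB).
  pose proof (weighted_iD_div_a_le (s * (1 - k) * iD) (k * (1 + k)) ltac:(lra) HkB).
  assert (A2 : Rabs (((1 - k * c) * iD) * ((y * iD) * iD * (1 + k ^ 2) / a))
               <= 4 * (p / (a ^ 2 * t))) by (apply abs1_mul_le; lra).
  assert (A3 : Rabs (- (((1 - k * c) * iD) * ((u * (1 - k) * iD) * iD * (k * (1 + k)) / a)))
               <= 4 * (p / (a ^ 2 * t))) by (rewrite Rabs_Ropp; apply abs1_mul_le; lra).
  assert (A4 : Rabs (- ((s * (1 - k) * iD) * iD * (k * (1 + k)) / a)) <= 4 * (p / (a ^ 2 * t)))
    by (rewrite Rabs_Ropp, Rabs_right; lra).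
  eapply Rle_trans; [apply Rabs_triang|]; eapply Rle_trans; [apply Rplus_le_compat_r, Rabs_triang|].
  eapply Rle_trans; [apply Rplus_le_compat_r, Rplus_le_compat_r, Rabs_triang|].
  lra.
Qed.

Lemma abs_p_div_a_Ru_a_corr_u_le :
  Rabs (p / a * Ru_a k u p a t * Rt_a_corr_u k u) <= 6 * (p / a ^ 2) * (228 * (1 + u)).
Proof.
  pose proof iD_pos; pose proof D_pos; pose proof y_iD_le_1; pose proof y_iD_le_u;
    pose proof y_iD_ge_0; pose proof u_one_sub_k_iD_le_1; pose proof u_one_sub_k_iD_le_u;
    pose proof u_one_sub_k_iD_ge_0.
  set (Z := p / a ^ 2); set (W := 228 * (1 + u)).
  assert (HZ : 0 < Z) by (unfold Z; apply Rdiv_lt_0_compat; [lra | apply pow_lt; lra]).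
  replace (p / a * Ru_a k u p a t * Rt_a_corr_u k u) with
    (Rt_a_corr_u k u * (t * iD / a) + Z * ((y * iD) * Rt_a_corr_u k u) * (1 + k ^ 2)
     + - (Z * ((u * (1 - k) * iD) * Rt_a_corr_u k u) * (k * (1 + k))))
    by (unfold Ru_a, dkappa, Z, iD, D, y in *; field; lra).
  assert (W1 : (y * iD) * Rabs (Rt_a_corr_u k u) <= W)
    by (apply weighted_abs_Rt_a_corr_u_le; lra).
  assert (W2 : (u * (1 - k) * iD) * Rabs (Rt_a_corr_u k u) <= W)
    by (apply weighted_abs_Rt_a_corr_u_le; lra).
  assert (HkA : 0 <= 1 + k ^ 2 <= 2) by (pose proof (pow_k_bounds 2); lra).
  assert (HkB : 0 <= k * (1 + k) <= 2) by nra.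
  pose proof (Rabs_pos (Rt_a_corr_u k u)).
  assert (S1 : Rabs (Rt_a_corr_u k u * (t * iD / a)) <= 2 * Z * W).
  { rewrite Rabs_mult, (Rabs_right (t * iD / a)) by (apply Rle_ge, Rdiv_le_0_compat; nra).
    assert (t * iD / a <= 2 * Z * (y * iD)).
    { unfold Z.
      replace (2 * (p / a ^ 2) * (y * iD)) with ((2 * p * y / a) * iD / a) by (field; lra).
      apply Rmult_le_compat_r; [left; apply Rinv_0_lt_compat; lra|].
      apply Rmult_le_compat_r; [lra|]; apply Rle_div_r; lra. }
    apply Rle_trans with (Rabs (Rt_a_corr_u k u) * (2 * Z * (y * iD)));
      [apply Rmult_le_compat_l; [apply Rabs_pos | lra]|].
    replace (Rabs (Rt_a_corr_u k u) * (2 * Z * (y * iD)))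
      with (2 * Z * ((y * iD) * Rabs (Rt_a_corr_u k u))) by ring.
    apply Rmult_le_compat_l; lra. }
  assert (S2 : Rabs (Z * ((y * iD) * Rt_a_corr_u k u) * (1 + k ^ 2)) <= 2 * Z * W).
  { rewrite Rabs_mul_nonneg_weight by lra.
    apply Rle_trans with (Z * 2 * W); [apply Rmult_le_compat; nra | lra]. }
  assert (S3 : Rabs (- (Z * ((u * (1 - k) * iD) * Rt_a_corr_u k u) * (k * (1 + k))))
               <= 2 * Z * W).
  { rewrite Rabs_Ropp, Rabs_mul_nonneg_weight by lra.
    apply Rle_trans with (Z * 2 * W); [apply Rmult_le_compat; nra | lra]. }
  eapply Rle_trans; [apply Rabs_triang|]; eapply Rle_trans; [apply Rplus_le_compat_r, Rabs_triang|].
  lra.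
Qed.

Lemma abs_Rt_aa_le_one_add_u : Rabs (Rt_aa k u p a t) <= 1500 * (p / a ^ 2) * (1 + u).
Proof.
  pose proof abs_Rt_tha_le; pose proof abs_Rt_a_corr_le; pose proof abs_Rt_a_corr_k_le.
  pose proof abs_p_div_a_Ru_a_corr_u_le.
  set (Z := p / a ^ 2) in *.
  assert (HZ : 0 < Z) by (unfold Z; apply Rdiv_lt_0_compat; [lra | apply pow_lt; lra]).
  replace (Rt_aa k u p a t) with
    (t * Rt_tha k u p a t + - (Z * (2 + k ^ 2) * Rt_a_corr k u)
     + p / a * Ru_a k u p a t * Rt_a_corr_u k u + - (Z * (k * (1 - k ^ 2) * Rt_a_corr_k k u)))
    by (unfold Rt_aa, dkappa, Z; field; lra).
  assert (S1 : Rabs (t * Rt_tha k u p a t) <= 16 * Z).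
  { rewrite Rabs_mult, (Rabs_right t) by lra.
    apply Rle_trans with (t * (16 * (p / (a ^ 2 * t)))); [apply Rmult_le_compat_l; lra|].
    unfold Z; right; field; lra. }
  assert (S2 : Rabs (- (Z * (2 + k ^ 2) * Rt_a_corr k u)) <= 3 * Z * (2 * u + 12)).
  { pose proof (pow_k_bounds 2).
    rewrite Rabs_Ropp, !Rabs_mult, (Rabs_right Z), (Rabs_right (2 + k ^ 2)) by lra.
    apply Rmult_le_compat; [apply Rmult_le_pos; lra | apply Rabs_pos | nra | lra]. }
  assert (S4 : Rabs (- (Z * (k * (1 - k ^ 2) * Rt_a_corr_k k u))) <= Z * (38 * (1 + u))).
  { rewrite Rabs_Ropp, Rabs_mult, (Rabs_right Z), Rabs_mult, (Rabs_right (k * (1 - k ^ 2)))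
      by (try apply Rle_ge; pose proof (pow_k_bounds 2); nra).
    apply Rmult_le_compat_l; lra. }
  eapply Rle_trans; [apply Rabs_4|]; nra.
Qed.

Lemma abs_Rt_aa_le : Rabs (Rt_aa k u p a t) <= 75000 * (/ a * jb (p / a) * ln (jb t)).
Proof.
  pose proof abs_Rt_aa_le_one_add_u; pose proof p_div_a_one_add_u_le.
  pose proof (Rinv_0_lt_compat a a_pos).
  replace (1500 * (p / a ^ 2) * (1 + u)) with (1500 * / a * (p / a * (1 + u))) in * by (field; lra).
  apply Rle_trans with (1500 * / a * (50 * (jb (p / a) * ln (jb t)))); [|right; ring].
  apply Rle_trans with (1500 * / a * (p / a * (1 + u))); [assumption|].
  apply Rmult_le_compat_l; [nra | assumption].
Qed.

End Estimates.

Lemma le_scale_r (c c' x y : R) : 0 <= y -> c <= c' -> x <= c * y -> x <= c' * y.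
Proof.
  intros Hy Hc Hx; apply Rle_trans with (c * y); [exact Hx | apply Rmult_le_compat_r; assumption].
Qed.

Theorem lemma2p18 (m : R) (hm : 0 < m) :
  exists C : R, 0 < C /\
  forall t th a l : R, 0 < t -> 0 < a -> 0 < l -> Rabs th <= a * t / 2 ->
    let p := pp m a l in
    a * t <= C * Rt m t th a l /\
    Rt m t th a l <= C * (p + a * t) /\
    Rabs (Derive (fun th' => Rt m t th' a l) th - 1) <= C * (p / (a * t)) /\
    Rabs (Derive (fun a' => Rt m t th a' l) a - t)
      <= C * (jb (p / a) * ln (jb t)) /\
    Rabs (Derive (fun th' => Derive (fun th'' => Rt m t th'' a l) th') th)
      <= C * (p / (a ^ 2 * t ^ 2)) /\
    Rabs (Derive (fun a' => Derive (fun th' => Rt m t th' a' l) th) a)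
      <= C * (p / (a ^ 2 * t)) /\
    Rabs (Derive (fun a' => Derive (fun a'' => Rt m t th a'' l) a') a)
      <= C * (/ a * jb (p / a) * ln (jb t)).
Proof.
  exists 75000; split; [lra|]; intros t th a l ht ha hl hth p; subst p.
  destruct (Ru_bounds m t l hm hl ht th a ha hth) as [hu [hpy1 hpy2]].
  assert (hs : 0 < th + a * t) by (apply Rabs_le_between in hth; nra).
  destruct (kappa_bounds m l hm hl a ha); pose proof (pp_pos m l hm hl a ha).
  pose proof (jb_ge (pp m a l / a)); pose proof (ln_jb_ge t); pose proof (Rinv_0_lt_compat a ha).
  rewrite Rt_eq, Derive_Rt_th, Derive_Rt_a, Derive2_Rt_thth, Derive2_Rt_tha, Derive2_Rt_aa
    by assumption.
  pose proof (cosh_sub_pos (kappa m a l) (Ru m t th a l) ltac:(lra)).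
  repeat split.
  - apply (le_scale_r 2); [nra | lra | apply Rt_lower; assumption].
  - apply (le_scale_r 15); [nra | lra | apply Rt_upper; assumption].
  - apply (le_scale_r 2); [apply Rdiv_le_0_compat; nra | lra |].
    apply abs_Rt_th_sub_1_le; assumption.
  - apply (le_scale_r 700); [nra | lra | apply abs_Rt_a_sub_t_le; assumption].
  - apply (le_scale_r 4); [| lra | apply abs_Rt_thth_le; assumption].
    apply Rdiv_le_0_compat; [lra | apply Rmult_lt_0_compat; apply pow_lt; lra].
  - apply (le_scale_r 16); [| lra | apply abs_Rt_tha_le; assumption].
    apply Rdiv_le_0_compat; [lra | apply Rmult_lt_0_compat; [apply pow_lt|]; lra].
  - apply abs_Rt_aa_le; assumption.
Qed.
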